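(* Let $M\ge \frac52$ and $\mu=\frac{2}{2M+3}$. Algorithm A (defined in the context) is a valid semi-online algorithm with migration factor at most $M$, and for every input whose optimal offline makespan is $1$ it produces a schedule of makespan at most $1+\mu=\frac{2M+5}{2M+3}$. Hence its competitive ratio is at most $\frac{2M+5}{2M+3}$.
   Context: Model (two hierarchical machines with migration, bin stretching). Jobs $1,2,\dots,n$ arrive one by one ($n$ unknown in advance). Job $j$ has a size $p_j>0$ and a grade of service (GoS) $g_j\in\{1,2\}$; a job of GoS $1$ may only be processed on machine $m_1$, a job of GoS $2$ may be processed on $m_1$ or on $m_2$. The load of a machine is the total size of the jobs assigned to it, and the makespan is the maximum load. When job $j$ arrives, the algorithm must assign it to a machine, and at the same time it may reassign (migrate) previously arrived jobs to other machines (respecting the GoS constraints), provided that the total size of the migrated jobs is at most $M\cdot p_j$; $M\ge 0$ is the migration factor. Bin stretching: the optimal offline makespan of the complete input is known in advance and scaled to $1$; in particular every job has size at most $1$, the total size of all jobs is at most $2$, and the total size of all GoS-$1$ jobs is at most $1$. The competitive ratio of an algorithm is the supremum over inputs of (algorithm's makespan)/(optimal makespan). Notation: $Y_{j}$ is the set of jobs on $m_2$ just after job $j$ has been handled (including migrations), $y_j$ its total size, $y_0=0$. $Z$ denotes the set of GoS-2 jobs currently on $m_1$. Algorithm A (with $\mu=\frac{2}{2M+3}$). On arrival of job $j$: (i) if $g_j=1$ or $y_{j-1}\ge 1-\mu$, assign $j$ to $m_1$; (ii) else if $y_{j-1}+p_j\le 1+\mu$, assign $j$ to $m_2$; (iii)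 otherwise, among all GoS-2 jobs arrived so far (the current $Z$, the current $Y_{j-1}$, and $j$), choose a subset $W$ of maximum total size subject to total size at most $1$; rearrange so that exactly the jobs of $W$ are on $m_2$ and all other arrived jobs are on $m_1$. *)

From mathcomp Require Import all_boot all_order all_algebra.
Set Implicit Arguments. Unset Strict Implicit. Unset Printing Implicit Defensive.
Import Order.TTheory GRing.Theory Num.Theory.
Local Open Scope ring_scope.

(* An input: n jobs 0..n-1 (arrival order), sizes p, grades of service g.
   A schedule of (a prefix of) the jobs is a map a : 'I_n -> bool,
   a i = true meaning job i is on m2, false meaning it is on m1.
   Only jobs i < t (the arrived ones) are relevant in a prefix of length t. *)

Section Defs.
Variables (R : realFieldType) (n : nat) (p : 'I_n -> R) (g : 'I_n -> nat).

Definition load2 (t : nat) (a : 'I_n -> bool) : R :=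
  \sum_(i < n | (i < t)%N && a i) p i.
Definition load1 (t : nat) (a : 'I_n -> bool) : R :=
  \sum_(i < n | (i < t)%N && ~~ a i) p i.

Definition gos_ok (t : nat) (a : 'I_n -> bool) : Prop :=
  forall i : 'I_n, (i < t)%N -> a i -> g i = 2%N.

Definition makespan (t : nat) (a : 'I_n -> bool) : R :=
  Num.max (load1 t a) (load2 t a).

Definition opt_makespan_is (opt : R) : Prop :=
  (exists a, gos_ok n a /\ makespan n a = opt) /\
  (forall a, gos_ok n a -> opt <= makespan n a).

(* total size of previously arrived jobs (i < j) moved between the state
   a (before job j) and a' (after job j was handled) *)
Definition migrated (j : nat) (a a' : 'I_n -> bool) : R :=
  \sum_(i < n | (i < j)%N && (a i != a' i)) p i.

Definition mu (M : R) : R := 2 / (2 * M + 3).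

(* One step of Algorithm A when job j arrives: a is the state before
   (jobs < j scheduled), a' the state after (jobs <= j scheduled).
   In case (iii) any subset of maximum total size may be chosen. *)
Definition algA_step (M : R) (j : 'I_n) (a a' : 'I_n -> bool) : Prop :=
  let y := load2 j a in
  if (g j == 1%N) || (1 - mu M <= y) then
    a' j = false /\ (forall i : 'I_n, (i < j)%N -> a' i = a i)
  else if y + p j <= 1 + mu M then
    a' j = true /\ (forall i : 'I_n, (i < j)%N -> a' i = a i)
  else
    (* W = {i <= j | a' i} is a max-size subset of arrived GoS-2 jobs
       of total size <= 1; all other arrived jobs are on m1 *)
    (forall i : 'I_n, (i <= j)%N -> a' i -> g i = 2%N) /\
    load2 j.+1 a' <= 1 /\
    (forall W : {set 'I_n},
        (forall i, i \in W -> (i <= j)%N /\ g i = 2%N) ->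
        \sum_(i in W) p i <= 1 ->
        \sum_(i in W) p i <= load2 j.+1 a').

(* s t = the state after the first t jobs have been handled *)
Definition algA_run (M : R) (s : nat -> 'I_n -> bool) : Prop :=
  forall j : 'I_n, algA_step M j (s (j : nat)) (s j.+1).

End Defs.

(* Write y for the load of m2 and o for an optimal schedule. Whenever A
   repacks, m2 receives a maximum-size subset of at most unit size of the
   GoS-2 jobs, and the GoS-2 jobs that o puts on m2 form such a subset; hence
   after every step either y >= 1 - mu, or y dominates the load that o puts on
   m2 among the arrived jobs. In both cases m1 ends with load at most 1 + mu,
   since the total size is at most 2 and o loads m1 with at most 1.
   A repack happens only when y < 1 - mu < 1 + mu < y + p_j, so p_j > 2 mu;
   counting the GoS-2 jobs against o bounds the moved size by M p_j, the
   choice mu = 2 / (2M + 3) making the two extreme cases tight. *)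
From mathcomp Require Import all_boot all_order all_algebra.
From mathcomp Require Import ring lra.
Set Implicit Arguments. Unset Strict Implicit.
Unset Printing Implicit Defensive.
Import Order.TTheory GRing.Theory Num.Theory.
Local Open Scope ring_scope.

Lemma ler_sum_subpred (R : numDomainType) (I : finType) (P Q : pred I)
    (F : I -> R) :
  (forall i, Q i -> 0 <= F i) -> subpred P Q ->
  \sum_(i | P i) F i <= \sum_(i | Q i) F i.
Proof.
move=> F_ge0 PQ; rewrite [X in _ <= X](bigID P) /=.
have -> : \sum_(i | Q i && P i) F i = \sum_(i | P i) F i.
  by apply: eq_bigl => i; case: (boolP (P i)) => Pi; rewrite ?(PQ _ Pi) ?andbF.
by rewrite lerDl sumr_ge0 // => i /andP[/F_ge0].
Qed.

Lemma sum_ord_ltS (V : nmodType) (n : nat) (F : 'I_n -> V) (P : pred 'I_n)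
    (j : 'I_n) :
  \sum_(i < n | (i < j.+1)%N && P i) F i =
  \sum_(i < n | (i < j)%N && P i) F i + (if P j then F j else 0).
Proof.
case: (boolP (P j)) => Pj.
  rewrite (bigD1 j) /=; last by rewrite ltnS leqnn Pj.
  rewrite addrC; congr (_ + _); apply: eq_bigl => i.
  rewrite -val_eqE /= ltnS leq_eqVlt.
  by case: (ltngtP i j); rewrite ?andbF ?andbT.
rewrite addr0; apply: eq_bigl => i; rewrite ltnS leq_eqVlt.
have [/val_inj -> | _] //= := eqVneq (i : nat) j.
by rewrite ltnn (negbTE Pj).
Qed.

Lemma load1_add_load2 (R : realFieldType) (n : nat) (p : 'I_n -> R)
    (a : 'I_n -> bool) :
  load1 p n a + load2 p n a = \sum_i p i.
Proof.
rewrite /load1 /load2 addrC -bigID /=.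
by apply: eq_bigl => i; rewrite ltn_ord.
Qed.

Lemma load2S (R : realFieldType) (n : nat) (p : 'I_n -> R) (j : 'I_n)
    (a : 'I_n -> bool) :
  load2 p j.+1 a = load2 p j a + (if a j then p j else 0).
Proof. exact: sum_ord_ltS. Qed.

Lemma load2_eq (R : realFieldType) (n : nat) (p : 'I_n -> R) (t : nat)
    (a a' : 'I_n -> bool) :
  (forall i : 'I_n, (i < t)%N -> a' i = a i) -> load2 p t a' = load2 p t a.
Proof. by move=> E; apply: eq_bigl => i; case: (ltnP i t) => // /E ->. Qed.

Lemma mu_gt0 (R : realFieldType) (M : R) : 0 <= M -> 0 < mu M.
Proof. by move=> M_ge0; rewrite divr_gt0 //; lra. Qed.

Lemma mulr_mu (R : realFieldType) (M : R) : 0 <= M -> (2 * M + 3) * mu M = 2.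
Proof. by move=> M_ge0; rewrite /mu; field; lra. Qed.

Lemma addr1_mu (R : realFieldType) (M : R) :
  0 <= M -> 1 + mu M = (2 * M + 5) / (2 * M + 3).
Proof. by move=> M_ge0; rewrite /mu; field; lra. Qed.

(* [d1] is the size moved from m2 to m1, [d2] the size moved from m1 to m2,
   [c] the size staying on m2, and [b] tells whether the new job goes to m2. *)
Lemma repack_migration_le (R : realFieldType) (M c d1 d2 q : R) (b : bool) :
  0 <= M -> 0 <= c ->
  c + d1 < 1 - mu M -> 1 + mu M < c + d1 + q ->
  c + d2 + (if b then q else 0) <= 1 ->
  c + d1 + d2 + q <= 1 + (c + d2 + (if b then q else 0)) ->
  d1 + d2 <= M * q.
Proof.
move=> M_ge0 c_ge0 y_lt y_gt; have := mulr_mu M_ge0.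
case: b => hm new_le hgos.
  have h1 : 0 <= (M + 1) * (q - (1 + mu M - (c + d1))) by apply: mulr_ge0; lra.
  have h2 : 0 <= (M + 2) * (1 - mu M - (c + d1)) by apply: mulr_ge0; lra.
  nra.
have h : 0 <= (M + 1) * (q - 2 * mu M) by apply: mulr_ge0; lra.
nra.
Qed.

Section AlgorithmA.

Variables (R : realFieldType) (M : R) (n : nat) (p : 'I_n -> R)
  (g : 'I_n -> nat).

Definition repack_admissible (j : 'I_n) (W : {set 'I_n}) : bool :=
  [forall i in W, (i <= j)%N && (g i == 2%N)] && (\sum_(i in W) p i <= 1).

Definition repack_set (j : 'I_n) : {set 'I_n} :=
  [arg max_(W > set0 | repack_admissible j W) \sum_(i in W) p i]%O.

Definition algA_next (j : 'I_n) (a : 'I_n -> bool) : 'I_n -> bool :=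
  if (g j == 1%N) || (1 - mu M <= load2 p j a) then
    fun i => if i == j then false else a i
  else if load2 p j a + p j <= 1 + mu M then
    fun i => if i == j then true else a i
  else fun i => i \in repack_set j.

Fixpoint algA_sched (t : nat) : 'I_n -> bool :=
  if t is t'.+1 then
    if insub t' is Some j then algA_next j (algA_sched t') else algA_sched t'
  else fun _ => false.

Lemma algA_sched_run : algA_run p g M algA_sched.
Proof.
move=> j; rewrite /= valK /algA_step /algA_next /=.
have keep (b : bool) (i : 'I_n) :
    (i < j)%N -> (if i == j then b else algA_sched j i) = algA_sched j i.
  by move=> lt_ij; rewrite ifN //; apply: contraTneq lt_ij => ->; rewrite ltnn.
case: ifP => C1; rewrite ?C1; first by split; [rewrite eqxx | exact: keep].
case: ifP => C2; rewrite ?C2; first by split; [rewrite eqxx | exact: keep].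
have adm0 : repack_admissible j set0.
  rewrite /repack_admissible big_set0 ler01 andbT.
  by apply/forall_inP => i; rewrite in_set0.
rewrite /repack_set.
case: arg_maxP => // W /andP[/forall_inP W_adm W_le1] W_max.
have -> : load2 p j.+1 (fun i => i \in W) = \sum_(i in W) p i.
  apply: eq_bigl => i; case: (boolP (i \in W)) => iW; rewrite ?andbF ?andbT //.
  by rewrite ltnS; case/andP: (W_adm _ iW).
split; [|split] => //.
  by move=> i _ /W_adm /andP[_ /eqP].
move=> W' W'_adm W'_le1; apply: W_max.
rewrite /repack_admissible W'_le1 andbT.
by apply/forall_inP => i /W'_adm [-> ->].
Qed.

Definition admissible_ub (j : 'I_n) (w : R) : Prop :=
  forall W : {set 'I_n}, (forall i, i \in W -> (i <= j)%N /\ g i = 2%N) ->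
  \sum_(i in W) p i <= 1 -> \sum_(i in W) p i <= w.

Variant algA_step_spec (j : 'I_n) (a a' : 'I_n -> bool) : Prop :=
  | AssignM1 of g j = 1%N \/ 1 - mu M <= load2 p j a
    & a' j = false & (forall i : 'I_n, (i < j)%N -> a' i = a i)
  | AssignM2 of g j != 1%N & load2 p j a < 1 - mu M
    & load2 p j a + p j <= 1 + mu M
    & a' j = true & (forall i : 'I_n, (i < j)%N -> a' i = a i)
  | Repack of g j != 1%N & load2 p j a < 1 - mu M
    & 1 + mu M < load2 p j a + p j
    & (forall i : 'I_n, (i <= j)%N -> a' i -> g i = 2%N)
    & load2 p j.+1 a' <= 1
    & admissible_ub j (load2 p j.+1 a').

Lemma algA_stepP (j : 'I_n) (a a' : 'I_n -> bool) :
  algA_step p g M j a a' -> algA_step_spec j a a'.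
Proof.
rewrite /algA_step /=.
case: ifP => [/orP y_big [aj keep] | /negbT/norP[gj1 y_small]].
  by apply: AssignM1 => //; case: y_big => [/eqP|]; auto.
rewrite -ltNge in y_small.
case: ifP => [fits [aj keep] | /negbT no_fit [gos [w_le1 w_max]]].
  exact: AssignM2.
by apply: Repack => //; rewrite ltNge.
Qed.

Variable o : 'I_n -> bool.
Hypotheses (o_gos : gos_ok g n o) (o_makespan : makespan p n o <= 1).

Lemma opt_load1_le : load1 p n o <= 1.
Proof. by apply: le_trans o_makespan; rewrite le_max lexx. Qed.

Lemma opt_load2_le : load2 p n o <= 1.
Proof. by apply: le_trans o_makespan; rewrite le_max lexx orbT. Qed.

Hypotheses (M_ge0 : 0 <= M) (p_ge0 : forall i, 0 <= p i)
  (g12 : forall i, g i = 1%N \/ g i = 2%N).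

(* The jobs that [o] puts on m2 are an admissible repacking. *)
Lemma opt_load2_le_repack (j : 'I_n) (w : R) :
  admissible_ub j w -> load2 p j.+1 o <= w.
Proof.
move=> w_max; set W := [set i : 'I_n | (i < j.+1)%N && o i].
have -> : load2 p j.+1 o = \sum_(i in W) p i.
  by apply: eq_bigl => i; rewrite inE.
apply: w_max => [i | ].
  by rewrite inE ltnS => /andP[-> /(o_gos (ltn_ord i))].
apply: le_trans opt_load2_le; apply: ler_sum_subpred => // i.
by rewrite inE => /andP[_ ->]; rewrite ltn_ord.
Qed.

Lemma gos2_le_repack (j : 'I_n) (w : R) :
  admissible_ub j w -> \sum_(i < n | (i < j.+1)%N && (g i == 2%N)) p i <= 1 + w.
Proof.
move=> w_max; rewrite (bigID o) /= addrC; apply: lerD.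
  apply: le_trans opt_load1_le; apply: ler_sum_subpred => // i.
  by case/andP => _ ->; rewrite ltn_ord.
apply: le_trans (opt_load2_le_repack w_max); apply: ler_sum_subpred => // i.
by case/andP=> /andP[-> _] ->.
Qed.

Lemma migrated_repack_le (j : 'I_n) (a a' : 'I_n -> bool) :
  gos_ok g j a -> g j = 2%N ->
  load2 p j a < 1 - mu M -> 1 + mu M < load2 p j a + p j ->
  (forall i : 'I_n, (i <= j)%N -> a' i -> g i = 2%N) ->
  load2 p j.+1 a' <= 1 ->
  admissible_ub j (load2 p j.+1 a') ->
  migrated p j a a' <= M * p j.
Proof.
move=> a_gos gj2 y_lt y_gt a'_gos w_le1 w_max.
set c := \sum_(i < n | (i < j)%N && (a i && a' i)) p i.
set d1 := \sum_(i < n | (i < j)%N && (a i && ~~ a' i)) p i.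
set d2 := \sum_(i < n | (i < j)%N && (~~ a i && a' i)) p i.
have split_sum (P Q : pred 'I_n) : \sum_(i < n | (i < j)%N && P i) p i =
    \sum_(i < n | (i < j)%N && P i && Q i) p i +
    \sum_(i < n | (i < j)%N && P i && ~~ Q i) p i by exact: bigID.
have mig : migrated p j a a' = d1 + d2.
  rewrite /migrated (split_sum _ a); congr (_ + _); apply: eq_bigl => i;
  by case: (a i); case: (a' i); rewrite /= ?andbT ?andbF.
have old : load2 p j a = c + d1.
  rewrite /load2 (split_sum _ a'); congr (_ + _); apply: eq_bigl => i;
  by case: (a i); case: (a' i); rewrite /= ?andbT ?andbF.
have new : load2 p j.+1 a' = c + d2 + (if a' j then p j else 0).
  rewrite /load2 sum_ord_ltS (split_sum _ a); congr (_ + _ + _);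
  by apply: eq_bigl => i; case: (a i); case: (a' i); rewrite /= ?andbT ?andbF.
have moved : c + d1 + d2 = \sum_(i < n | (i < j)%N && (a i || a' i)) p i.
  rewrite -old (split_sum _ a); congr (_ + _); apply: eq_bigl => i;
  by case: (a i); case: (a' i); rewrite /= ?andbT ?andbF.
have moved_gos2 : c + d1 + d2 + p j <=
    \sum_(i < n | (i < j.+1)%N && (g i == 2%N)) p i.
  rewrite sum_ord_ltS gj2 eqxx lerD2r moved.
  apply: ler_sum_subpred => // i /andP[lt_ij /orP[ai | ai']]; rewrite lt_ij /=.
    by rewrite (a_gos _ lt_ij ai).
  by rewrite (a'_gos _ (ltnW lt_ij) ai').
have c_ge0 : 0 <= c by apply: sumr_ge0.
rewrite mig; apply: (repack_migration_le (c := c) (b := a' j)) => //.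
- by rewrite -old.
- by rewrite -old.
- by rewrite -new.
- by rewrite -new; apply: le_trans moved_gos2 (gos2_le_repack w_max).
Qed.

Lemma gos_ok_step (j : 'I_n) (a a' : 'I_n -> bool) :
  gos_ok g j a -> algA_step p g M j a a' -> gos_ok g j.+1 a'.
Proof.
move=> a_gos step i; rewrite ltnS.
case: (algA_stepP step) => [_ a'j keep | gj1 _ _ _ keep | _ _ _ a'_gos _ _].
- rewrite leq_eqVlt => /orP[/eqP/val_inj -> | lt_ij]; first by rewrite a'j.
  by rewrite keep //; exact: a_gos.
- rewrite leq_eqVlt => /orP[/eqP/val_inj -> _ | lt_ij].
    by move: gj1; case: (g12 j) => ->.
  by rewrite keep //; exact: a_gos.
- exact: a'_gos.
Qed.

Lemma gos_ok_run s :
  algA_run p g M s -> forall t, (t <= n)%N -> gos_ok g t (s t).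
Proof.
move=> run; elim=> [|t IH] t_lt; first by move=> i.
exact: (gos_ok_step (j := Ordinal t_lt) (IH (ltnW t_lt)) (run _)).
Qed.

Lemma migrated_eq0 (j : 'I_n) (a a' : 'I_n -> bool) :
  (forall i : 'I_n, (i < j)%N -> a' i = a i) -> migrated p j a a' = 0.
Proof.
move=> keep; rewrite /migrated big_pred0 // => i.
by case: (ltnP i j) => [/keep -> | _]; rewrite ?eqxx ?andbF.
Qed.

Lemma migrated_run_le s :
  algA_run p g M s -> forall j : 'I_n, migrated p j (s j) (s j.+1) <= M * p j.
Proof.
move=> run j; have Mp_ge0 : 0 <= M * p j by rewrite mulr_ge0.
case: (algA_stepP (run j)) => [_ _ keep | _ _ _ _ keep |
  gj1 y_lt y_gt a'_gos w_le1 w_max].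
- by rewrite migrated_eq0.
- by rewrite migrated_eq0.
apply: migrated_repack_le => //; first exact/gos_ok_run/ltnW.
by move: gj1; case: (g12 j) => ->.
Qed.

Definition load2_invariant (t : nat) (a : 'I_n -> bool) : Prop :=
  load2 p t a <= 1 + mu M /\
  (1 - mu M <= load2 p t a \/ load2 p t o <= load2 p t a).

Lemma load2_invariant_step (j : 'I_n) (a a' : 'I_n -> bool) :
  load2_invariant j a -> algA_step p g M j a a' -> load2_invariant j.+1 a'.
Proof.
move=> [y_le y_cases] step.
case: (algA_stepP step) => [gj_y a'j keep | _ _ y_fit a'j keep |
  _ _ _ _ w_le1 w_max].
- rewrite /load2_invariant load2S a'j addr0 (load2_eq p keep).
  case: gj_y => [gj1 | y_big]; last by split; [|left].
  rewrite load2S; case: (boolP (o j)) => [oj | _]; last by rewrite addr0.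
  by have := o_gos (ltn_ord j) oj; rewrite gj1.
- have o_new : load2 p j.+1 o <= load2 p j o + p j.
    by rewrite load2S lerD2l; case: (o j).
  rewrite /load2_invariant load2S a'j (load2_eq p keep); split => //.
  case: y_cases => y_case; [left | right].
    by apply: le_trans y_case _; rewrite lerDl.
  by apply: le_trans o_new _; rewrite lerD2r.
- split; first by have := mu_gt0 M_ge0; lra.
  by right; exact: opt_load2_le_repack.
Qed.

Lemma load2_invariant_run s :
  algA_run p g M s -> forall t, (t <= n)%N -> load2_invariant t (s t).
Proof.
move=> run; elim=> [|t IH] t_lt.
  have load2_0 (a : 'I_n -> bool) : load2 p 0 a = 0 by rewrite /load2 big_pred0.
  rewrite /load2_invariant !load2_0.
  by split; [have := mu_gt0 M_ge0; lra | right].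
exact: (load2_invariant_step (j := Ordinal t_lt) (IH (ltnW t_lt)) (run _)).
Qed.

Lemma makespan_run_le s :
  algA_run p g M s -> makespan p n (s n) <= 1 + mu M.
Proof.
move=> run; have [y_le y_cases] := load2_invariant_run run (leqnn n).
rewrite /makespan ge_max y_le andbT.
have := load1_add_load2 p (s n); have := load1_add_load2 p o.
have := opt_load1_le; have := opt_load2_le; have := mu_gt0 M_ge0.
by case: y_cases => ?; lra.
Qed.

End AlgorithmA.

Theorem mainTheorem1 (R : realFieldType) (M : R) (hM : 5 / 2 <= M)
  (n : nat) (p : 'I_n -> R) (g : 'I_n -> nat)
  (hp : forall j, 0 < p j)
  (hg : forall j, g j = 1%N \/ g j = 2%N)
  (hopt : opt_makespan_is p g 1) :
  (exists s : nat -> 'I_n -> bool, algA_run p g M s) /\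
  (forall s : nat -> 'I_n -> bool, algA_run p g M s ->
     (forall j : 'I_n, migrated p j (s (j : nat)) (s j.+1) <= M * p j) /\
     (forall t : nat, (t <= n)%N -> gos_ok g t (s t)) /\
     makespan p n (s n) <= 1 + mu M /\
     1 + mu M = (2 * M + 5) / (2 * M + 3)).
Proof.
have M_ge0 : 0 <= M by lra.
have p_ge0 j : 0 <= p j := ltW (hp j).
have [[o [o_gos o_opt]] _] := hopt.
have o_makespan : makespan p n o <= 1 by rewrite o_opt.
split; first by exists (algA_sched M p g); exact: algA_sched_run.
move=> s run; split; [|split; [|split]].
- exact: (migrated_run_le o_gos o_makespan M_ge0 p_ge0 hg run).
- exact: (gos_ok_run hg run).
- exact: (makespan_run_le o_gos o_makespan M_ge0 p_ge0 run).
- exact: addr1_mu.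
Qed.
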